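(* Let $G = G_1\times\dots\times G_n$ be a direct product of finitely generated groups $G_i$, and let $\varphi\in\mathrm{Aut}(G)$ be of the form $(g_1,\dots,g_n)\mapsto(\varphi_1(g_1),\dots,\varphi_n(g_n))$ with $\varphi_i\in\mathrm{Aut}(G_i)$ for all $1\le i\le n$. Then the $\varphi$-twisted conjugacy problem $\mathrm{TCP}_\varphi(G)$ is solvable if and only if $\mathrm{TCP}_{\varphi_i}(G_i)$ is solvable for all $1\le i\le n$.
   Context: For a group $H$ with finite generating set $Y$ and $\psi\in\mathrm{Aut}(H)$, elements $u,v\in H$ are $\psi$-twisted conjugate if there exists $w\in H$ with $v=\psi(w)^{-1}uw$. The $\psi$-twisted conjugacy problem $\mathrm{TCP}_\psi(H)$ asks for an algorithm that, given two words over $Y\cup Y^{-1}$, decides whether the elements they represent are $\psi$-twisted conjugate in $H$. *)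

From Stdlib Require Import FunctionalExtensionality.
From Stdlib Require List.
From mathcomp Require Import all_boot.
Set Implicit Arguments. Unset Strict Implicit. Unset Printing Implicit Defensive.

Record group := Group {
  gcar :> Type;
  gmul : gcar -> gcar -> gcar;
  gone : gcar;
  ginv : gcar -> gcar;
  gmulA : forall x y z, gmul x (gmul y z) = gmul (gmul x y) z;
  gmul1g : forall x, gmul gone x = x;
  gmulVg : forall x, gmul (ginv x) x = gone
}.

Definition is_aut (H : group) (f : H -> H) : Prop :=
  (forall x y, f (gmul x y) = gmul (f x) (f y)) /\ bijective f.

Section Product.
Variables (n : nat) (G : 'I_n -> group).
Definition prod_car := forall i : 'I_n, G i.
Definition prod_mul (x y : prod_car) : prod_car := fun i => gmul (x i) (y i).
Definition prod_one : prod_car := fun i => gone (G i).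
Definition prod_inv (x : prod_car) : prod_car := fun i => ginv (x i).
Lemma prod_mulA x y z : prod_mul x (prod_mul y z) = prod_mul (prod_mul x y) z.
Proof. apply: functional_extensionality_dep => i; exact: gmulA. Qed.
Lemma prod_mul1g x : prod_mul prod_one x = x.
Proof. apply: functional_extensionality_dep => i; exact: gmul1g. Qed.
Lemma prod_mulVg x : prod_mul (prod_inv x) x = prod_one.
Proof. apply: functional_extensionality_dep => i; exact: gmulVg. Qed.
Definition prod_group : group :=
  @Group prod_car prod_mul prod_one prod_inv prod_mulA prod_mul1g prod_mulVg.

Definition prod_map (phi : forall i, G i -> G i) : prod_group -> prod_group :=
  fun x i => phi i (x i).
End Product.

(* Words over Y u Y^-1, for a finite generating list Y = [y_0,...].   *)
(* The letter (b, i) stands for y_i if b = false and y_i^-1 if b.     *)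
Definition word := seq (bool * nat).

Definition valid_word (k : nat) (w : word) : bool := all (fun l => l.2 < k) w.

Definition eval_word (H : group) (Y : seq H) (w : word) : H :=
  foldr (fun l acc => gmul (if l.1 then ginv (nth (gone H) Y l.2)
                            else nth (gone H) Y l.2) acc) (gone H) w.

Definition generates (H : group) (Y : seq H) : Prop :=
  forall g : H, exists2 w, valid_word (size Y) w & eval_word Y w = g.

Definition twisted_conj (H : group) (psi : H -> H) (u v : H) : Prop :=
  exists w : H, v = gmul (ginv (psi w)) (gmul u w).

Inductive prf : Type :=
| PZero : prf
| PSucc : prf
| PProj : nat -> prf
| PComp : prf -> list prf -> prf
| PPrim : prf -> prf -> prf
| PMu   : prf -> prf.

Inductive prf_eval : prf -> list nat -> nat -> Prop :=
| ev_zero xs : prf_eval PZero xs 0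
| ev_succ xs : prf_eval PSucc xs (head 0 xs).+1
| ev_proj i xs : prf_eval (PProj i) xs (nth 0 xs i)
| ev_comp f gs xs ys z :
    List.Forall2 (fun g y => prf_eval g xs y) gs ys ->
    prf_eval f ys z -> prf_eval (PComp f gs) xs z
| ev_prim0 f g xs y : prf_eval f xs y -> prf_eval (PPrim f g) (0 :: xs) y
| ev_primS f g m xs y z :
    prf_eval (PPrim f g) (m :: xs) y ->
    prf_eval g (m :: y :: xs) z ->
    prf_eval (PPrim f g) (m.+1 :: xs) z
| ev_mu f xs m :
    prf_eval f (m :: xs) 0 ->
    (forall j, j < m -> exists k, prf_eval f (j :: xs) k.+1) ->
    prf_eval (PMu f) xs m.

(* Standard (computable, injective) encoding of words as naturals. *)
Definition word_code (w : word) : nat := pickle w.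

Definition TCP_solvable (H : group) (psi : H -> H) : Prop :=
  exists Y : seq H, generates Y /\
  exists p : prf, forall u v : word,
    valid_word (size Y) u -> valid_word (size Y) v ->
    (twisted_conj psi (eval_word Y u) (eval_word Y v) ->
       prf_eval p [:: word_code u; word_code v] 1) /\
    (~ twisted_conj psi (eval_word Y u) (eval_word Y v) ->
       prf_eval p [:: word_code u; word_code v] 0).

From Stdlib Require Import FunctionalExtensionality ClassicalEpsilon Classical.
From Stdlib Require List.
From mathcomp Require Import all_boot zify.
Set Implicit Arguments. Unset Strict Implicit. Unset Printing Implicit Defensive.

(* Twisted conjugacy in G is componentwise, so u and v are twisted conjugate
   in G iff their i-th coordinates are for every i.  A factor G_i embeds into
   G compatibly with phi, so a decider for G, run on the words obtained by
   replacing each generator of G_i by a word over the generators of G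
   representing its image, decides TCP in G_i.  Conversely, taking as
   generators of G the generators of the factors placed in their own
   coordinates, the i-th coordinate of a word is the word obtained by keeping
   the letters of block i; the deciders of the factors are run on these words
   and their 0/1 answers multiplied.  Both reductions rest on letter-by-letter
   substitution of words being a (primitive) recursive function of their
   codes, which are decoded by bounded searches from
   code (m :: s) = 2 ^ m * (2 * code s + 1). *)

(** * Partial recursive functions *)

Definition computable (k : nat) (F : seq nat -> nat) : Prop :=
  exists p, forall xs, size xs = k -> prf_eval p xs (F xs).

Implicit Types (k : nat) (F G : seq nat -> nat).

Lemma computable_ext k F G :
  computable k F -> (forall xs, size xs = k -> F xs = G xs) -> computable k G.
Proof. by move=> [p Hp] FG; exists p => xs Hxs; rewrite -FG //; apply: Hp. Qed.

Lemma computable_proj k i : computable k (fun xs => nth 0 xs i).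
Proof. by exists (PProj i) => xs _; constructor. Qed.

Lemma computable_comp k F (Gs : seq (seq nat -> nat)) :
  List.Forall (computable k) Gs -> computable (size Gs) F ->
  computable k (fun xs => F (map (fun G => G xs) Gs)).
Proof.
move=> cGs [pF HF].
have [ps Hps] : exists ps, forall xs, size xs = k ->
    List.Forall2 (fun p y => prf_eval p xs y) ps (map (fun G => G xs) Gs).
  elim: cGs => [|G Gs' [pG HG] _ [ps IH]]; first by exists [::] => xs _; constructor.
  by exists (pG :: ps) => xs Hxs; constructor; [apply: HG | apply: IH].
exists (PComp pF ps) => xs Hxs; apply: ev_comp (Hps xs Hxs) _.
by apply: HF; rewrite size_map.
Qed.

Lemma computable_comp1 k F G :
  computable 1 F -> computable k G -> computable k (fun xs => F [:: G xs]).
Proof. by move=> cF cG; apply: (@computable_comp k F [:: G]) _ cF; do !constructor. Qed.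

Lemma computable_comp2 k F G1 G2 :
  computable 2 F -> computable k G1 -> computable k G2 ->
  computable k (fun xs => F [:: G1 xs; G2 xs]).
Proof. by move=> cF c1 c2; apply: (@computable_comp k F [:: G1; G2]) _ cF; do !constructor. Qed.

Lemma computable_succ k F : computable k F -> computable k (fun xs => (F xs).+1).
Proof.
have cS : computable 1 (fun ys => (head 0 ys).+1) by exists PSucc => xs _; constructor.
exact: computable_comp1 cS.
Qed.

Lemma computable_const k c : computable k (fun=> c).
Proof.
elim: c => [|c IH]; last exact: computable_succ IH.
by exists PZero => xs _; constructor.
Qed.

Fixpoint natrec (b : nat) (s : nat -> nat -> nat) (n : nat) : nat :=
  if n is m.+1 then s m (natrec b s m) else b.

Lemma computable_rec k A B S :
  computable k A -> computable k B -> computable k.+2 S ->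
  computable k (fun xs => natrec (B xs) (fun m y => S [:: m, y & xs]) (A xs)).
Proof.
move=> [pA HA] [pB HB] [pS HS].
exists (PComp (PPrim pB pS) (pA :: map PProj (iota 0 k))) => xs Hxs.
have Hproj : List.Forall2 (fun p y => prf_eval p xs y) (map PProj (iota 0 k)) xs.
  rewrite -[in X in List.Forall2 _ _ X](mkseq_nth 0 xs) Hxs /mkseq.
  by elim: (iota 0 k) => [|i s IH] /=; do !constructor.
apply: ev_comp; first by constructor; [apply: HA | apply: Hproj].
elim: (A xs) => [|m IH] /=; first by constructor; apply: HB.
by apply: ev_primS IH _; apply: HS; rewrite /= Hxs.
Qed.

Lemma computable_reindex k m F (idx : seq nat) :
  computable m F -> size idx = m -> computable k (fun xs => F (map (nth 0 xs) idx)).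
Proof.
move=> cF Hidx; have cGs : List.Forall (computable k) (map (fun i xs => nth 0 xs i) idx).
  by elim: idx {Hidx cF} => [|i idx IH] /=; constructor => //; apply: computable_proj.
have cF' : computable (size (map (fun i xs => nth 0 xs i) idx)) F by rewrite size_map Hidx.
by apply: computable_ext (computable_comp cGs cF') _ => xs _; rewrite -map_comp.
Qed.

Lemma computable_lift1 k f F :
  computable 1 (fun xs => f (nth 0 xs 0)) -> computable k F ->
  computable k (fun xs => f (F xs)).
Proof. exact: computable_comp1. Qed.

Lemma computable_lift2 k f F G :
  computable 2 (fun xs => f (nth 0 xs 0) (nth 0 xs 1)) ->
  computable k F -> computable k G -> computable k (fun xs => f (F xs) (G xs)).
Proof. exact: computable_comp2. Qed.

Lemma computable_pred k F : computable k F -> computable k (fun xs => (F xs).-1).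
Proof.
apply: (@computable_lift1 k predn).
apply: computable_ext (computable_rec (computable_proj 1 0) (computable_const 1 0)
                                     (computable_proj 3 0)) _.
by move=> xs _; case: (nth 0 xs 0).
Qed.

Lemma computable_add k F G :
  computable k F -> computable k G -> computable k (fun xs => F xs + G xs).
Proof.
apply: (@computable_lift2 k addn).
apply: computable_ext (computable_rec (computable_proj 2 1) (computable_proj 2 0)
                        (computable_succ (computable_proj 4 1))) _ => xs _ /=.
by elim: (nth 0 xs 1) => [|m IH] /=; rewrite ?addn0 ?addnS ?IH.
Qed.

Lemma computable_sub k F G :
  computable k F -> computable k G -> computable k (fun xs => F xs - G xs).
Proof.
apply: (@computable_lift2 k subn).
apply: computable_ext (computable_rec (computable_proj 2 1) (computable_proj 2 0)
                        (computable_pred (computable_proj 4 1))) _ => xs _ /=.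
by elim: (nth 0 xs 1) => [|m IH] /=; rewrite ?subn0 ?subnS ?IH.
Qed.

Lemma computable_mul k F G :
  computable k F -> computable k G -> computable k (fun xs => F xs * G xs).
Proof.
apply: (@computable_lift2 k muln).
apply: computable_ext (computable_rec (computable_proj 2 1) (computable_const 2 0)
         (computable_add (computable_proj 4 1) (computable_proj 4 2))) _ => xs _ /=.
by elim: (nth 0 xs 1) => [|m IH] /=; rewrite ?muln0 ?mulnS ?IH 1?addnC.
Qed.

Lemma computable_exp2 k F : computable k F -> computable k (fun xs => 2 ^ F xs).
Proof.
apply: (@computable_lift1 k (expn 2)).
apply: computable_ext (computable_rec (computable_proj 1 0) (computable_const 1 1)
         (computable_add (computable_proj 3 1) (computable_proj 3 1))) _ => xs _ /=.
by elim: (nth 0 xs 0) => [|m IH] //=; rewrite IH expnS mul2n addnn.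
Qed.

Lemma computable_leq k F G :
  computable k F -> computable k G -> computable k (fun xs => F xs <= G xs).
Proof.
move=> cF cG; apply: computable_ext (computable_sub (computable_const k 1)
                                    (computable_sub cF cG)) _.
by move=> xs _; case: leqP; lia.
Qed.

Lemma computable_eqn k F G :
  computable k F -> computable k G -> computable k (fun xs => F xs == G xs).
Proof.
move=> cF cG; apply: computable_ext (computable_mul (computable_leq cF cG)
                                                    (computable_leq cG cF)) _.
by move=> xs _; rewrite eqn_leq; case: (F xs <= G xs); rewrite ?mul1n.
Qed.

Lemma computable_if k (P : seq nat -> bool) F G :
  computable k P -> computable k F -> computable k G ->
  computable k (fun xs => if P xs then F xs else G xs).
Proof.
move=> cP cF cG; apply: computable_ext (computable_add (computable_mul cP cF)
                  (computable_mul (computable_sub (computable_const k 1) cP) cG)) _.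
by move=> xs _; case: (P xs); rewrite /= ?mul1n ?mul0n ?addn0.
Qed.

Lemma computable_sum k f A :
  computable k.+1 f -> computable k A ->
  computable k (fun xs => \sum_(0 <= i < A xs) f (i :: xs)).
Proof.
move=> cf cA.
have cf' : computable k.+2 (fun zs => f (map (nth 0 zs) (0 :: iota 2 k))).
  by apply: computable_reindex cf _; rewrite /= size_iota.
apply: computable_ext (computable_rec cA (computable_const k 0)
                        (computable_add (computable_proj _ 1) cf')) _ => xs Hxs.
elim: (A xs) => [|m IH] /=; first by rewrite big_geq.
rewrite big_nat_recr //= IH -(addn0 2) iotaDl -map_comp.
by congr (_ + f (m :: _)); rewrite -[RHS](mkseq_nth 0 xs) Hxs.
Qed.

Lemma sum_indicator_lt n t : \sum_(0 <= i < n) (i < t) = minn t n.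
Proof.
elim: n => [|n IH]; first by rewrite big_geq // minn0.
by rewrite big_nat_recr //= IH; case: (ltnP n t) => Hnt; lia.
Qed.

Lemma computable_behead k F : computable k F -> computable k.+1 (fun zs => F (behead zs)).
Proof.
move=> cF; apply: computable_ext (computable_reindex k.+1 cF (size_iota 1 k)) _.
case=> [|z zs] //= [Hzs].
by rewrite -[in RHS](mkseq_nth 0 zs) Hzs /mkseq -(addn0 1) iotaDl -map_comp.
Qed.

Lemma computable_divn k F G :
  computable k F -> computable k G -> computable k (fun xs => F xs %/ G xs).
Proof.
move=> cF cG.
have cq : computable k.+1 (fun zs => (nth 0 zs 0).+1 * G (behead zs) <= F (behead zs)).
  apply: computable_leq (computable_behead cF).
  exact: computable_mul (computable_succ (computable_proj _ 0)) (computable_behead cG).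
apply: computable_ext (computable_mul (computable_sum cq cF)
                        (computable_leq (computable_const k 1) cG)) _ => xs _ /=.
have [->|Gpos] := posnP (G xs); first by rewrite muln0 divn0.
rewrite muln1 -[RHS](minn_idPl (leq_div (F xs) (G xs))) -sum_indicator_lt.
by apply: eq_bigr => q _; rewrite -leq_divRL.
Qed.

Lemma computable_dvdn k F G :
  computable k F -> computable k G -> computable k (fun xs => F xs %| G xs).
Proof.
move=> cF cG; apply: computable_ext (computable_eqn (computable_mul
  (computable_divn cG cF) cF) cG) _ => xs _.
by rewrite dvdn_eq.
Qed.

Lemma computable_logn2 k F : computable k F -> computable k (fun xs => logn 2 (F xs)).
Proof.
move=> cF.
have cd : computable k.+1 (fun zs => 2 ^ (nth 0 zs 0).+1 %| F (behead zs)).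
  exact: computable_dvdn (computable_exp2 (computable_succ (computable_proj _ 0)))
                         (computable_behead cF).
apply: computable_ext (computable_sum cd cF) _ => xs _ /=.
have [->|Fpos] := posnP (F xs); first by rewrite big_geq ?logn0.
have logF : logn 2 (F xs) <= F xs.
  apply: leq_trans (ltnW (ltn_expl _ (ltnSn 1))) (dvdn_leq Fpos (pfactor_dvdnn 2 _)).
rewrite -[RHS](minn_idPl logF) -sum_indicator_lt.
by apply: eq_bigr => j _; rewrite pfactor_dvdn.
Qed.

Lemma computable_iter k f A B :
  computable 1 (fun xs => f (nth 0 xs 0)) -> computable k A -> computable k B ->
  computable k (fun xs => iter (A xs) f (B xs)).
Proof.
move=> cf cA cB.
have cS : computable k.+2 (fun zs => f (nth 0 zs 1)).
  exact: computable_lift1 cf (computable_proj _ 1).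
apply: computable_ext (computable_rec cA cB cS) _ => xs _.
by elim: (A xs) => //= m ->.
Qed.

(** * Codes of sequences and words *)

Notation code := CodeSeq.code.

Lemma code_cons m s : code (m :: s) = 2 ^ m * (code s).*2.+1.
Proof. by []. Qed.

Lemma logn2_code_cons m s : logn 2 (code (m :: s)) = m.
Proof.
rewrite code_cons lognM ?expn_gt0 // pfactorK // logn_coprime ?addn0 //.
by rewrite coprime2n /= odd_double.
Qed.

Definition code_behead (c : nat) : nat := c %/ 2 ^ (logn 2 c).+1.

Lemma code_beheadE s : code_behead (code s) = code (behead s).
Proof.
case: s => [|m s] //; rewrite /code_behead logn2_code_cons code_cons expnSr.
by rewrite divnMl ?expn_gt0 // divn2 /= uphalf_double.
Qed.

Lemma code_dropE s j : iter j code_behead (code s) = code (drop j s).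
Proof. by rewrite drop_behead; elim: j => //= j ->; rewrite code_beheadE. Qed.

Lemma size_code s : size s <= code s.
Proof.
elim: s => // m s IH; rewrite code_cons /=.
apply: leq_trans (leq_pmull _ (expn_gt0 2 m)); rewrite -addnn; lia.
Qed.

Definition code_scale (s : seq nat) : nat := 2 ^ (sumn s + size s).

Lemma code_cat s t : code (s ++ t) = code_scale s * code t + code s.
Proof.
elim: s => [|m s IH]; first by rewrite /code_scale mul1n addn0.
rewrite cat_cons !code_cons IH /code_scale /= addnS -addnA expnS [2 ^ (m + _)]expnD.
by set a := 2 ^ m; set b := 2 ^ (_ + _); rewrite -!muln2; nia.
Qed.

Lemma word_codeE (w : word) : word_code w = code (map pickle w).
Proof. by []. Qed.

Definition word_scale (w : word) : nat := code_scale (map pickle w).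

Lemma word_code_cat (s t : word) : word_code (s ++ t) = word_scale s * word_code t + word_code s.
Proof. by rewrite !word_codeE map_cat code_cat. Qed.

(** * Substitution of words is computable *)

Fixpoint lookup (tbl : seq (nat * nat)) (d m : nat) : nat :=
  if tbl is (key, v) :: tbl' then if m == key then v else lookup tbl' d m else d.

Lemma computable_lookup k tbl d F :
  computable k F -> computable k (fun xs => lookup tbl d (F xs)).
Proof.
move=> cF; elim: tbl => [|[key v] tbl IH] /=; first exact: computable_const.
exact: computable_if (computable_eqn cF (computable_const k key)) (computable_const k v) IH.
Qed.

Lemma lookup_pickle (T : countType) (f : T -> nat) (s : seq T) d x :
  x \in s -> lookup [seq (pickle y, f y) | y <- s] d (pickle x) = f x.
Proof.
elim: s => //= y s IH; rewrite in_cons => /orP[/eqP->|xs]; first by rewrite eqxx.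
by case: eqP => [/(pcan_inj pickleK)->|_]; last exact: IH.
Qed.

Definition letters (K : nat) : seq (bool * nat) :=
  [seq (b, j) | b <- [:: false; true], j <- iota 0 K].

Lemma mem_letters K (l : bool * nat) : (l \in letters K) = (l.2 < K).
Proof.
case: l => b j; apply/allpairsP/idP => [[[b' j'] [_ /= jK [_ ->]]]|jK].
  by rewrite mem_iota in jK.
by exists (b, j); rewrite mem_iota jK; split => //; case: b {jK}.
Qed.

Definition subst_word (tau : bool * nat -> word) (w : word) : word := flatten (map tau w).

Lemma subst_word_cat tau (s t : word) :
  subst_word tau (s ++ t) = subst_word tau s ++ subst_word tau t.
Proof. by rewrite /subst_word map_cat flatten_cat. Qed.

Lemma subst_word_flatten tau (ws : seq word) :
  subst_word tau (flatten ws) = flatten (map (subst_word tau) ws).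
Proof. by elim: ws => //= w ws IH; rewrite subst_word_cat IH. Qed.


Section SubstitutionIsComputable.
Variables (tau : bool * nat -> word) (K : nat).

(* Letters are never decoded: on the finitely many letters of index < K, any
   function of a letter is a table lookup on its [pickle]. *)
Definition letter_table (f : bool * nat -> nat) : seq (nat * nat) :=
  [seq (pickle l, f l) | l <- letters K].

(* From the code [y] of the image of the last [k] letters of the word coded by
   [c], compute the code of the image of its last [k.+1] letters; [word_code_cat]
   makes this affine in [y].  While fewer than [k.+1] letters remain the
   result stays [0], the code of the empty word. *)
Definition subst_step (c k y : nat) : nat :=
  let s := iter (c - k.+1) code_behead c in
  if 0 < s then lookup (letter_table (fun l => word_scale (tau l))) 0 (logn 2 s) * y
                + lookup (letter_table (fun l => word_code (tau l))) 0 (logn 2 s)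
  else 0.

Definition subst_code (c : nat) : nat := natrec 0 (subst_step c) c.

Lemma computable_subst_code : computable 1 (fun xs => subst_code (nth 0 xs 0)).
Proof.
have cs : computable 3 (fun zs => iter (nth 0 zs 2 - (nth 0 zs 0).+1) code_behead (nth 0 zs 2)).
  apply: computable_iter (computable_sub (computable_proj _ 2)
                           (computable_succ (computable_proj _ 0))) (computable_proj _ 2).
  exact: computable_divn (computable_proj _ 0)
           (computable_exp2 (computable_succ (computable_logn2 (computable_proj _ 0)))).
have ch := computable_logn2 cs.
have cstep : computable 3 (fun zs => subst_step (nth 0 zs 2) (nth 0 zs 0) (nth 0 zs 1)).
  apply: computable_if (computable_leq (computable_const _ 1) cs) _ (computable_const _ 0).
  apply: computable_add (computable_lookup _ _ ch).
  exact: computable_mul (computable_lookup _ _ ch) (computable_proj _ 1).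
apply: computable_ext (computable_rec (computable_proj 1 0) (computable_const 1 0) cstep) _.
by case=> [|c []].
Qed.

Lemma subst_codeE w : valid_word K w -> subst_code (word_code w) = word_code (subst_word tau w).
Proof.
move=> Kw; set c := word_code w.
suff natrec_drop k : k <= c ->
    natrec 0 (subst_step c) k = word_code (subst_word tau (drop (c - k) w)).
  by rewrite /subst_code natrec_drop // subnn drop0.
have size_w : size w <= c by rewrite -(size_map pickle); apply: size_code.
elim: k => [|k IH] kc; first by rewrite subn0 drop_oversize.
rewrite /= IH 1?ltnW // /subst_step code_dropE -map_drop -word_codeE.
case Ew: (drop (c - k.+1) w) => [|l r] //.
have -> : c - k = 1 + (c - k.+1) by lia.
rewrite -drop_drop Ew /= drop0 word_codeE /= logn2_code_cons muln_gt0 expn_gt0 /=.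
have lK : l \in letters K.
  rewrite mem_letters; apply: (allP Kw).
  by rewrite -(cat_take_drop (c - k.+1) w) Ew mem_cat mem_head orbT.
by rewrite !lookup_pickle // /subst_word /= word_code_cat.
Qed.

Lemma subst_word_computable : exists S : prf, forall w, valid_word K w ->
  prf_eval S [:: word_code w] (word_code (subst_word tau w)).
Proof.
have [S HS] := computable_subst_code.
by exists S => w Kw; rewrite -subst_codeE //; apply: HS.
Qed.

End SubstitutionIsComputable.

(** * Groups, morphisms and words *)

Section GroupTheory.
Variable H : group.
Implicit Types x y : H.

Lemma gmulgV x : gmul x (ginv x) = gone H.
Proof.
rewrite -[gmul x _]gmul1g -(gmulVg (ginv x)) -gmulA.
by rewrite [gmul (ginv x) (gmul _ _)]gmulA gmulVg gmul1g gmulVg.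
Qed.

Lemma gmulg1 x : gmul x (gone H) = x.
Proof. by rewrite -(gmulVg x) gmulA gmulgV gmul1g. Qed.

Lemma ginv_unique x y : gmul x y = gone H -> x = ginv y.
Proof. by move=> xy1; rewrite -[x]gmulg1 -(gmulgV y) gmulA xy1 gmul1g. Qed.

Lemma ginvK x : ginv (ginv x) = x.
Proof. by symmetry; apply: ginv_unique; apply: gmulgV. Qed.

Lemma ginvM x y : ginv (gmul x y) = gmul (ginv y) (ginv x).
Proof.
symmetry; apply: ginv_unique.
by rewrite -gmulA [gmul (ginv x) _]gmulA gmulVg gmul1g gmulVg.
Qed.

Lemma ginv1 : ginv (gone H) = gone H.
Proof. by symmetry; apply: ginv_unique; rewrite gmul1g. Qed.

End GroupTheory.

Section Morphism.
Variables (H H' : group) (f : H -> H').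
Hypothesis fM : {morph f : x y / gmul x y}.

Lemma morph_gone : f (gone H) = gone H'.
Proof.
have := fM (gone H) (gone H); rewrite gmul1g => f1.
by rewrite -[LHS]gmul1g -(gmulVg (f (gone H))) -gmulA -f1.
Qed.

Lemma morph_ginv x : f (ginv x) = ginv (f x).
Proof. by apply: ginv_unique; rewrite -fM gmulVg morph_gone. Qed.

End Morphism.

Definition eval_letter (H : group) (Y : seq H) (l : bool * nat) : H :=
  if l.1 then ginv (nth (gone H) Y l.2) else nth (gone H) Y l.2.

Definition inv_word (w : word) : word := rev (map (fun l => (~~ l.1, l.2)) w).

Section Words.
Variable H : group.
Implicit Types (Y : seq H) (w : word).

Lemma eval_word_cons Y l w : eval_word Y (l :: w) = gmul (eval_letter Y l) (eval_word Y w).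
Proof. by []. Qed.

Lemma eval_word_cat Y s t : eval_word Y (s ++ t) = gmul (eval_word Y s) (eval_word Y t).
Proof. by elim: s => [|l s IH]; rewrite /= ?gmul1g // IH gmulA. Qed.

Lemma eval_inv_word Y w : eval_word Y (inv_word w) = ginv (eval_word Y w).
Proof.
elim: w => [|l w IH]; first by rewrite /= ginv1.
rewrite /inv_word map_cons rev_cons -cats1 eval_word_cat IH /= gmulg1 ginvM.
by rewrite /eval_letter /=; case: l.1; rewrite ?ginvK.
Qed.

Lemma valid_inv_word K w : valid_word K (inv_word w) = valid_word K w.
Proof. by rewrite /valid_word all_rev all_map. Qed.

Lemma valid_subst_word K tau w :
  (forall l, valid_word K (tau l)) -> valid_word K (subst_word tau w).
Proof.
by move=> Ktau; elim: w => //= l w IH; rewrite /valid_word all_cat [all _ (tau l)]Ktau.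
Qed.

End Words.

Section MorphismWords.
Variables (H H' : group) (f : H -> H').
Hypothesis fM : {morph f : x y / gmul x y}.

Lemma eval_letter_map (Y : seq H) l : eval_letter (map f Y) l = f (eval_letter Y l).
Proof.
have nth_map_f j : nth (gone H') (map f Y) j = f (nth (gone H) Y j).
  case: (ltnP j (size Y)) => jY; first exact: nth_map.
  by rewrite !nth_default ?size_map // morph_gone.
by rewrite /eval_letter; case: l.1; rewrite nth_map_f ?(morph_ginv fM).
Qed.

Lemma eval_word_map (Y : seq H) w : eval_word (map f Y) w = f (eval_word Y w).
Proof.
elim: w => [|l w IH]; first exact/esym/morph_gone.
by rewrite !eval_word_cons IH eval_letter_map fM.
Qed.

Lemma eval_subst_word (Y : seq H) (Y' : seq H') tau w :
  (forall l, eval_word Y' (tau l) = f (eval_letter Y l)) ->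
  eval_word Y' (subst_word tau w) = f (eval_word Y w).
Proof.
move=> Etau; elim: w => [|l w IH]; first exact/esym/morph_gone.
by rewrite /subst_word /= eval_word_cat -/(subst_word _ _) IH Etau fM.
Qed.

End MorphismWords.

(** * Deciders *)

Definition decides (p : prf) (K : nat) (R : word -> word -> Prop) : Prop :=
  forall u v, valid_word K u -> valid_word K v ->
    (R u v -> prf_eval p [:: word_code u; word_code v] 1) /\
    (~ R u v -> prf_eval p [:: word_code u; word_code v] 0).

Lemma decides_ext p K (R R' : word -> word -> Prop) :
  decides p K R -> (forall u v, valid_word K u -> valid_word K v -> R u v <-> R' u v) ->
  decides p K R'.
Proof. by move=> dR RR' u v Ku Kv; rewrite -RR' //; apply: dR. Qed.

Lemma decides_subst p K K' R tau :
  (forall l, valid_word K' (tau l)) -> decides p K' R ->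
  exists q, decides q K (fun u v => R (subst_word tau u) (subst_word tau v)).
Proof.
move=> K'tau dR; have [S HS] := subst_word_computable tau K.
exists (PComp p [:: PComp S [:: PProj 0]; PComp S [:: PProj 1]]) => u v Ku Kv.
have ev b : prf_eval p [:: word_code (subst_word tau u); word_code (subst_word tau v)] b ->
    prf_eval (PComp p [:: PComp S [:: PProj 0]; PComp S [:: PProj 1]])
             [:: word_code u; word_code v] b.
  move=> Hb; apply: ev_comp Hb; do !constructor.
    by apply: ev_comp (HS u Ku); do !constructor; apply: (ev_proj 0).
  by apply: ev_comp (HS v Kv); do !constructor; apply: (ev_proj 1).
have [tR fR] := dR _ _ (valid_subst_word u K'tau) (valid_subst_word v K'tau).
by split=> [/tR|/fR]; apply: ev.
Qed.

Lemma decides_and p1 p2 K R1 R2 :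
  decides p1 K R1 -> decides p2 K R2 ->
  exists q, decides q K (fun u v => R1 u v /\ R2 u v).
Proof.
move=> d1 d2; have [pm Hm] := computable_mul (computable_proj 2 0) (computable_proj 2 1).
exists (PComp pm [:: p1; p2]) => u v Ku Kv; set xs := [:: word_code u; word_code v].
have ev b1 b2 : prf_eval p1 xs b1 -> prf_eval p2 xs b2 ->
    prf_eval (PComp pm [:: p1; p2]) xs (b1 * b2).
  by move=> e1 e2; apply: ev_comp (Hm [:: b1; b2] erefl); do !constructor.
have [t1 f1] := d1 u v Ku Kv; have [t2 f2] := d2 u v Ku Kv.
have [b2 e2] : exists b2, prf_eval p2 xs b2.
  by case: (classic (R2 u v)) => [/t2|/f2]; eexists; eassumption.
split=> [[/t1 e1 /t2 e2']|nR]; first exact: ev _ _ e1 e2'.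
case: (classic (R1 u v)) => [r1|/f1 e1]; last exact: ev _ _ e1 e2.
have /f2 e2' : ~ R2 u v by move=> r2; apply: nR.
exact: ev _ _ (t1 r1) e2'.
Qed.

Lemma decides_all (I : eqType) (s : seq I) K (R : I -> word -> word -> Prop) :
  (forall i, i \in s -> exists p, decides p K (R i)) ->
  exists q, decides q K (fun u v => forall i, i \in s -> R i u v).
Proof.
elim: s => [|i s IH] dR.
  have [p1 Hp1] := computable_const 2 1.
  by exists p1 => u v _ _; split=> [_|[]]; [apply: Hp1 | by []].
have [p dp] := dR i (mem_head i s).
have [q dq] := IH (fun j js => dR j (mem_behead (s := i :: s) js)).
have [r dr] := decides_and dp dq; exists r; apply: (decides_ext dr) => u v _ _.
split=> [[Ri Rs] j|Rall]; first by rewrite in_cons => /orP[/eqP->|/Rs].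
by split=> [|j js]; apply: Rall; rewrite in_cons ?eqxx ?js ?orbT.
Qed.

Lemma decides_morph_image (H H' : group) (f : H -> H') (R : H' -> H' -> Prop)
    (Y : seq H) (Y' : seq H') p :
  {morph f : x y / gmul x y} -> generates Y' ->
  decides p (size Y') (fun u v => R (eval_word Y' u) (eval_word Y' v)) ->
  exists q, decides q (size Y) (fun u v => R (f (eval_word Y u)) (f (eval_word Y v))).
Proof.
move=> fM genY' dp.
have W j : {w | valid_word (size Y') w /\ eval_word Y' w = f (nth (gone H) Y j)}.
  apply: constructive_indefinite_description.
  by have [w Kw Ew] := genY' (f (nth (gone H) Y j)); exists w.
pose tau (l : bool * nat) := if l.1 then inv_word (sval (W l.2)) else sval (W l.2).
have valid_tau l : valid_word (size Y') (tau l).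
  by rewrite /tau; case: (svalP (W l.2)) => Kw _; case: l.1; rewrite ?valid_inv_word.
have eval_tau l : eval_word Y' (tau l) = f (eval_letter Y l).
  rewrite /tau /eval_letter; case: (svalP (W l.2)) => _ Ew.
  by case: l.1; rewrite ?eval_inv_word Ew ?(morph_ginv fM).
have [q dq] := decides_subst (size Y) valid_tau dp.
by exists q; apply: (decides_ext dq) => u v _ _; rewrite !(eval_subst_word fM _ eval_tau).
Qed.

(** * Direct products *)

Lemma flatten_map_pick (I : eqType) (T : Type) (f : I -> seq T) (s : seq I) i :
  uniq s -> i \in s -> flatten [seq if j == i then f j else [::] | j <- s] = f i.
Proof.
elim: s => //= j s IH /andP[js us]; rewrite in_cons.
have [<- _|ji /= iS] := eqVneq j i; last exact: IH.
rewrite -[RHS]cats0; congr cat; elim: s js {IH us} => //= k s IH.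
by rewrite in_cons negb_or => /andP[/negPf jk /IH ->]; rewrite eq_sym jk.
Qed.

Section Product.
Variables (n : nat) (G : 'I_n -> group).
Implicit Types (x y : prod_group G).

Definition prod_proj (i : 'I_n) (x : prod_group G) : G i := (x : prod_car G) i.

Lemma prod_projM i : {morph prod_proj i : x y / gmul x y}.
Proof. by []. Qed.

Lemma prod_eqP x y : (forall i, prod_proj i x = prod_proj i y) -> x = y.
Proof. exact: functional_extensionality_dep. Qed.

Lemma twisted_conj_prod (phi : forall i, G i -> G i) x y :
  twisted_conj (prod_map phi) x y <->
  (forall i, twisted_conj (phi i) (prod_proj i x) (prod_proj i y)).
Proof.
split=> [[w ->] i|tc]; first by exists (prod_proj i w).
pose w i := sval (constructive_indefinite_description _ (tc i)).
exists (w : prod_car G); apply: prod_eqP => i.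
exact: svalP (constructive_indefinite_description _ (tc i)).
Qed.

Definition prod_emb (i : 'I_n) (a : G i) : prod_group G :=
  (fun j => if i =P j is ReflectT e then eq_rect i (fun k : 'I_n => gcar (G k)) a j e
            else gone (G j)) : prod_car G.

Lemma prod_embK i a : prod_proj i (prod_emb a) = a.
Proof.
by rewrite /prod_proj /prod_emb; case: eqP => // e; rewrite (eq_irrelevance e erefl).
Qed.

Lemma prod_embM i : {morph @prod_emb i : a b / gmul a b}.
Proof.
move=> a b; apply: prod_eqP => j; rewrite /prod_proj /= /prod_mul /prod_emb.
by case: eqP => [e|_]; [case: j / e | rewrite gmul1g].
Qed.

Lemma prod_map_emb (phi : forall i, G i -> G i) i a :
  (forall j, {morph phi j : x y / gmul x y}) ->
  prod_map phi (prod_emb a) = prod_emb (phi i a).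
Proof.
move=> phiM; apply: prod_eqP => j; rewrite /prod_proj /prod_map /prod_emb.
by case: eqP => [e|_]; [case: j / e | apply: morph_gone].
Qed.

Lemma twisted_conj_emb (phi : forall i, G i -> G i) i a b :
  (forall j, {morph phi j : x y / gmul x y}) ->
  twisted_conj (prod_map phi) (prod_emb a) (prod_emb b) <-> twisted_conj (phi i) a b.
Proof.
move=> phiM; split=> [[w /(congr1 (prod_proj i))]|[w ->]].
  by rewrite !prod_projM !prod_embK => ->; exists (prod_proj i w).
exists (prod_emb w).
by rewrite prod_map_emb // -(morph_ginv (@prod_embM i)) -!prod_embM.
Qed.

End Product.

Section BlockGenerators.
Variables (n : nat) (G : 'I_n -> group) (Y : forall i, seq (G i)).

Definition block_size : nat := (\max_(i < n) size (Y i)).+1.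
Local Notation K := block_size.

Lemma size_lt_block_size i : size (Y i) < K.
Proof. by rewrite ltnS (@leq_bigmax _ (fun i => size (Y i))). Qed.

(* The generator with index [i * K + r] is the [r]-th generator of [G i],
   placed in coordinate [i]. *)
Definition block_gens : seq (prod_group G) :=
  mkseq (fun j => (fun i : 'I_n => if i == j %/ K :> nat
                    then nth (gone (G i)) (Y i) (j %% K) else gone (G i)) : prod_car G)
        (n * K).

Definition block_shift (i : 'I_n) (w : word) : word :=
  map (fun l => (l.1, i * K + l.2)) w.

Definition block_restrict (i : 'I_n) (l : bool * nat) : word :=
  if (l.2 %/ K == i) && (l.2 %% K < size (Y i)) then [:: (l.1, l.2 %% K)] else [::].

Lemma eval_block_restrict i l :
  eval_word (Y i) (block_restrict i l) = prod_proj i (eval_letter block_gens l).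
Proof.
have nth_gens : prod_proj i (nth (gone _) block_gens l.2) =
    if i == l.2 %/ K :> nat then nth (gone (G i)) (Y i) (l.2 %% K) else gone (G i).
  case: (ltnP l.2 (n * K)) => lnK; first by rewrite nth_mkseq.
  rewrite nth_default ?size_mkseq //; case: eqP => // iE.
  by move: (ltn_ord i); rewrite iE ltn_divLR // ltnNge lnK.
rewrite /block_restrict /eval_letter [l.2 %/ K == i]eq_sym.
have proj_inv x : prod_proj i (ginv x) = ginv (prod_proj i x) by [].
case: l.1; rewrite ?proj_inv nth_gens; case: (_ == _ %/ K); rewrite /= ?ginv1 //;
  by case: ltnP => lY; rewrite /= ?gmulg1 // nth_default ?ginv1.
Qed.

Lemma block_restrict_shift i j w : valid_word (size (Y i)) w ->
  subst_word (block_restrict j) (block_shift i w) = if i == j then w else [::].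
Proof.
elim: w => [|[b r] w IH] /=; first by case: eqP.
move=> /andP[rY /IH {}IH]; rewrite /subst_word /= -/(subst_word _ _) IH.
have rK : r < K := ltn_trans rY (size_lt_block_size i).
rewrite /block_restrict /= divnMDl // modnMDl divn_small // modn_small // addn0.
by case: (eqVneq i j) => [<-|/negPf ij]; rewrite ?eqxx ?rY //= val_eqE ij.
Qed.

Lemma generates_block_gens : (forall i, generates (Y i)) -> generates block_gens.
Proof.
move=> genY g.
have W i : {w | valid_word (size (Y i)) w /\ eval_word (Y i) w = prod_proj i g}.
  apply: constructive_indefinite_description.
  by have [w Kw Ew] := genY i (prod_proj i g); exists w.
exists (flatten [seq block_shift i (sval (W i)) | i <- enum 'I_n]).
  apply/allP => l /flatten_mapP[i _ /mapP[[b r] rW ->]] /=.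
  have rY : r < size (Y i) by case: (svalP (W i)) => /allP/(_ _ rW).
  rewrite size_mkseq; have := ltn_ord i; have := size_lt_block_size i; nia.
apply: prod_eqP => j; rewrite -(eval_subst_word (prod_projM j) _ (eval_block_restrict j)).
rewrite subst_word_flatten -map_comp.
rewrite (eq_map (g := fun i => if i == j then sval (W i) else [::])); last first.
  by move=> i /=; rewrite block_restrict_shift //; case: (svalP (W i)).
by rewrite flatten_map_pick ?enum_uniq ?mem_enum //; case: (svalP (W j)).
Qed.

End BlockGenerators.

Lemma TCP_solvable_factor (n : nat) (G : 'I_n -> group) (phi : forall i, G i -> G i) i :
  (forall j, {morph phi j : x y / gmul x y}) ->
  TCP_solvable (prod_map phi) -> TCP_solvable (phi i).
Proof.
move=> phiM [Y [genY [p dp]]]; exists (map (prod_proj i) Y); split.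
  move=> a; have [w Kw Ew] := genY (prod_emb a).
  by exists w; rewrite ?size_map // eval_word_map // Ew prod_embK.
have [q dq] := decides_morph_image (map (prod_proj i) Y) (@prod_embM _ _ i) genY dp.
exists q; apply: (decides_ext dq) => u v _ _.
exact: twisted_conj_emb.
Qed.

Lemma TCP_solvable_prod (n : nat) (G : 'I_n -> group) (phi : forall i, G i -> G i) :
  (forall i, TCP_solvable (phi i)) -> TCP_solvable (prod_map phi).
Proof.
move=> tcp; pose Y i := sval (constructive_indefinite_description _ (tcp i)).
have [genY dY] : (forall i, generates (Y i)) /\ (forall i, exists p, decides p (size (Y i))
    (fun u v => twisted_conj (phi i) (eval_word (Y i) u) (eval_word (Y i) v))).
  by split=> i; case: (svalP (constructive_indefinite_description _ (tcp i))).
exists (block_gens Y); split; first exact: generates_block_gens.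
have [q dq] : exists q, decides q (size (block_gens Y)) (fun u v => forall i, i \in enum 'I_n ->
    twisted_conj (phi i) (prod_proj i (eval_word (block_gens Y) u))
                         (prod_proj i (eval_word (block_gens Y) v))).
  apply: decides_all => i _; have [p dp] := dY i.
  exact: decides_morph_image _ (@prod_projM _ _ i) (genY i) dp.
exists q; apply: (decides_ext dq) => u v _ _; rewrite twisted_conj_prod.
by split=> tc i; [apply: tc; rewrite mem_enum | move=> _].
Qed.

Theorem corollary3p26 (n : nat) (G : 'I_n -> group)
  (phi : forall i : 'I_n, G i -> G i)
  (Gfg : forall i : 'I_n, exists Y : seq (G i), generates Y)
  (phi_aut : forall i : 'I_n, is_aut (phi i)) :
  TCP_solvable (prod_map phi) <-> (forall i : 'I_n, TCP_solvable (phi i)).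
Proof.
have phiM i : {morph phi i : x y / gmul x y} := (phi_aut i).1.
split=> [tcp i|]; first exact: TCP_solvable_factor.
exact: TCP_solvable_prod.
Qed.
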